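(* Let $p,r$ be positive integers, $s=p+2r$, and write elements of $\mathbb{R}^{(p+s)\times p}$ as $X=(X_0;X_1;X_2;X_3)$ with blocks $X_0,X_1\in\mathbb{R}^{p\times p}$, $X_2,X_3\in\mathbb{R}^{r\times p}$; set $A=X_0-X_1$, $B=X_0+X_1$, $W=X_2+iX_3$. Let $\hat M$ be an element of the complexification $\mathfrak{so}(p,r)^{\mathbb{C}}$ and define $\hat\Phi:\mathbb{R}^{(p+s)\times p}\to\mathbb{C}^{(p+r)\times p}$ by $\hat\Phi(X)=\binom{A}{W}+\hat M\binom{B}{\bar W}$. Then the complex valued components of $\hat\Phi$ constitute an orthogonal harmonic family on $\mathbb{R}^{(p+s)\times p}$ equipped with the semi-Euclidean metric.
   Context: The semi-Euclidean metric on $\mathbb{R}^{(p+s)\times p}$ is $(X,Y)=\mathrm{trace}(X^tI_{ps}Y)$ with $I_{ps}=\mathrm{diag}(-I_p,I_s)$, i.e. the first $p$ rows (the block $X_0$) are negative. $\mathfrak{so}(p,r)^{\mathbb{C}}=\{M\in\mathbb{C}^{(p+r)\times(p+r)}: M^tI_{pr}+I_{pr}M=0\}$ with $I_{pr}=\mathrm{diag}(-I_p,I_r)$. For a semi-Riemannian manifold $(M,g)$ and complex functions $\phi,\psi$, $\tau(\phi)$ is the Laplace–Beltrami operator (extended complex-linearly) and $\kappa(\phi,\psi)=g(\mathrm{grad}\,\phi,\mathrm{grad}\,\psi)$ with $g$ extended complex-bilinearly. A set $\Omega$ of complex functions is an orthogonal harmonic family if $\tau(\phi)=0$ and $\kappa(\phi,\psi)=0$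 for all $\phi,\psi\in\Omega$. *)

From HB Require Import structures.
From mathcomp Require Import all_boot all_order all_algebra.
From mathcomp Require Import complex.
From mathcomp Require Import all_classical all_reals all_analysis.
Set Implicit Arguments.
Unset Strict Implicit.
Unset Printing Implicit Defensive.
Import Order.TTheory GRing.Theory Num.Theory.
Local Open Scope ring_scope.

Section Defs.
Variable R : realType.

Definition pdC (n m : nat) (a : 'I_n) (b : 'I_m) (f : 'M[R]_(n, m) -> R[i])
  : 'M[R]_(n, m) -> R[i] :=
  fun X => (('D_(delta_mx a b) (fun Y => complex.Re (f Y)) X)
           +i* ('D_(delta_mx a b) (fun Y => complex.Im (f Y)) X))%C.

(* semi-Euclidean metric on R^{(p+s) x p}: (X,Y) = trace(X^t I_ps Y),
   I_ps = diag(-I_p, I_s): the coefficient of the coordinate x_{ab} is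
   eps a = -1 if a < p, +1 otherwise.  It is diagonal with entries +-1, so
   g^{-1} has the same diagonal. *)
Definition sE_eps (p s : nat) (a : 'I_(p + s)) : R[i] :=
  if (a < p)%N then -1 else 1.

(* Laplace--Beltrami operator of the flat semi-Euclidean metric, extended
   complex-linearly:  tau(f) = sum_{a,b} eps_a d^2 f / d x_{ab}^2 *)
Definition tau (p s : nat) (f : 'M[R]_(p + s, p) -> R[i]) : 'M[R]_(p + s, p) -> R[i] :=
  fun X => \sum_(a < p + s) \sum_(b < p) sE_eps a * pdC a b (pdC a b f) X.

(* kappa(f,g) = g(grad f, grad g), complex bilinear *)
Definition kappa (p s : nat) (f g : 'M[R]_(p + s, p) -> R[i])
  : 'M[R]_(p + s, p) -> R[i] :=
  fun X => \sum_(a < p + s) \sum_(b < p) sE_eps a * (pdC a b f X * pdC a b g X).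

Definition orthogonal_harmonic_family (p s : nat) (Omega : (('M[R]_(p + s, p) -> R[i]) -> Prop)) :=
  (forall f, Omega f -> forall X, tau f X = 0) /\
  (forall f g, Omega f -> Omega g -> forall X, kappa f g X = 0).

Definition Ipr (p r : nat) : 'M[R[i]]_(p + r) :=
  block_mx (- 1%:M) 0 0 1%:M.

Definition in_soC (p r : nat) (M : 'M[R[i]]_(p + r)) : Prop :=
  M^T *m Ipr p r + Ipr p r *m M = 0.

(* the map Phi-hat, with s = p + 2r written as p + (r + r) and
   X = (X0; X1; X2; X3) *)
Definition Phihat (p r : nat) (M : 'M[R[i]]_(p + r))
  (X : 'M[R]_(p + (p + (r + r)), p)) : 'M[R[i]]_(p + r, p) :=
  let X0 := usubmx X in
  let X1 := usubmx (dsubmx X) in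
  let X2 := usubmx (dsubmx (dsubmx X)) in
  let X3 := dsubmx (dsubmx (dsubmx X)) in
  let A := \matrix_(i < p, j < p) ((X0 i j - X1 i j)%:C)%C in
  let B := \matrix_(i < p, j < p) ((X0 i j + X1 i j)%:C)%C in
  let W := \matrix_(i < r, j < p) (X2 i j +i* X3 i j)%C in
  let Wbar := \matrix_(i < r, j < p) (X2 i j -i* X3 i j)%C in
  col_mx A W + M *m col_mx B Wbar.

End Defs.

(* Phihat is R-linear in X, so every coordinate has constant first partial
   derivatives: its Laplacian vanishes, and for coordinates of X |-> P X
   (P a complex (p+r) x (p+s) matrix) the gradient pairing is the (k, k')
   entry of P I_ps P^T.  Writing Phihat(X) = (J + M K) X, where J and K are
   the coefficient matrices of X |-> (A; W) and X |-> (B; Wbar), one finds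
   J I_ps J^T = K I_ps K^T = 0 and J I_ps K^T = K I_ps J^T = 2 I_pr, so that
   (J + M K) I_ps (J + M K)^T = 2 (I_pr M^T + M I_pr)
                              = 2 I_pr (M^T I_pr + I_pr M) I_pr = 0. *)

From HB Require Import structures.
From mathcomp Require Import all_boot all_order all_algebra.
From mathcomp Require Import complex.
From mathcomp Require Import all_classical all_reals all_analysis.
From mathcomp Require Import ring.
Set Implicit Arguments.
Unset Strict Implicit.
Unset Printing Implicit Defensive.
Import Order.TTheory GRing.Theory Num.Theory.
Local Open Scope ring_scope.

Lemma derive_affine_line (R : realType) (V : normedModType R) (F : V -> R)
    (v x : V) (L : R) :
  (forall h : R, F (h *: v + x) = F x + h * L) -> 'D_v F x = L.
Proof.
move=> FE; apply: cvg_lim => // P [e /= e0 sP]; rewrite nbhs_simpl /=.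
near=> h; rewrite /= FE addrC addKr /GRing.scale /= mulrA mulVf ?mul1r //.
  by apply: sP; rewrite /ball_ /= subrr normr0.
by near: h; exact: withinT.
Unshelve. all: by end_near.
Qed.

Lemma mulmx_form_expand (K : comNzRingType) m n (J L : 'M[K]_(m, n))
    (E : 'M[K]_n) (M : 'M[K]_m) :
  (J + M *m L) *m E *m (J + M *m L)^T =
  J *m E *m J^T + J *m E *m L^T *m M^T
  + M *m (L *m E *m J^T) + M *m (L *m E *m L^T) *m M^T.
Proof. by rewrite linearD /= trmx_mul !mulmxDl !mulmxDr !mulmxA addrA. Qed.

Definition cplx_mx (R : realType) m n (X : 'M[R]_(m, n)) : 'M[R[i]]_(m, n) :=
  map_mx (real_complex R) X.

Section RealLinear.
Variables (R : realType) (n m : nat).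
Local Open Scope complex_scope.

Definition real_linear (f : 'M[R]_(n, m) -> R[i]) :=
  forall (h : R) v x, f (h *: v + x) = h%:C * f v + f x.

Lemma pdC_real_linear f a b X :
  real_linear f -> pdC a b f X = f (delta_mx a b).
Proof.
move=> lin_f; rewrite /pdC.
rewrite (@derive_affine_line _ _ _ _ _ (complex.Re (f (delta_mx a b)))); last first.
  by move=> h; rewrite lin_f; case: (f (delta_mx a b)) (f X) => [? ?] [? ?] /=; ring.
rewrite (@derive_affine_line _ _ _ _ _ (complex.Im (f (delta_mx a b)))); last first.
  by move=> h; rewrite lin_f; case: (f (delta_mx a b)) (f X) => [? ?] [? ?] /=; ring.
by case: (f _).
Qed.

Lemma pdC_cst (c : R[i]) a b (X : 'M[R]_(n, m)) : pdC a b (fun=> c) X = 0.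
Proof. by rewrite /pdC !(@derive_affine_line _ _ _ _ _ 0) // => h; ring. Qed.

End RealLinear.

Section LinearFamily.
Variables (R : realType) (p s : nat).
Local Open Scope complex_scope.

Lemma tau_real_linear (f : 'M[R]_(p + s, p) -> R[i]) X :
  real_linear f -> tau f X = 0.
Proof.
move=> lin_f; rewrite /tau big1 // => a _; rewrite big1 // => b _.
have -> : pdC a b f = fun=> f (delta_mx a b).
  by apply: funext => Y; exact: pdC_real_linear.
by rewrite pdC_cst mulr0.
Qed.

Definition mx_coord m (P : 'M[R[i]]_(m, p + s)) k l (X : 'M[R]_(p + s, p)) :=
  (P *m cplx_mx X) k l.

Lemma real_linear_mx_coord m (P : 'M[R[i]]_(m, p + s)) k l :
  real_linear (mx_coord P k l).
Proof.
move=> h v x; rewrite /mx_coord.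
have -> : cplx_mx (h *: v + x) = (h%:C) *: cplx_mx v + cplx_mx x.
  by apply/matrixP => i j; rewrite !mxE rmorphD rmorphM.
by rewrite mulmxDr -scalemxAr !mxE.
Qed.

Lemma mx_coord_delta m (P : 'M[R[i]]_(m, p + s)) k l a b :
  mx_coord P k l (delta_mx a b) = P k a * (b == l)%:R.
Proof.
rewrite /mx_coord mxE (bigD1 a) //= big1 => [|j /negbTE ja]; last first.
  by rewrite !mxE ja mulr0.
by rewrite !mxE eqxx /= addr0 eq_sym rmorph_nat.
Qed.

Lemma pdC_mx_coord m (P : 'M[R[i]]_(m, p + s)) k l a b X :
  pdC a b (mx_coord P k l) X = P k a * (b == l)%:R.
Proof. by rewrite pdC_real_linear ?mx_coord_delta //; exact: real_linear_mx_coord. Qed.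

Lemma Ipr_diag a a' : Ipr R p s a a' = (a == a')%:R * sE_eps R a.
Proof.
rewrite /Ipr /sE_eps; case: (split_ordP a) => i ->; case: (split_ordP a') => j ->;
  rewrite ?block_mxEul ?block_mxEur ?block_mxEdl ?block_mxEdr !mxE
    ?eq_lshift ?eq_rshift ?eq_lrshift ?eq_rlshift /= ?ltn_ord ?(ltnNge, leq_addr) /=.
- by rewrite mulrN1.
- by rewrite mul0r.
- by rewrite mul0r.
- by rewrite mulr1.
Qed.

Lemma mulmx_Ipr m (P : 'M[R[i]]_(m, p + s)) k a :
  (P *m Ipr R p s) k a = P k a * sE_eps R a.
Proof.
rewrite mxE (bigD1 a) //= big1 => [|j /negbTE ja]; last by rewrite Ipr_diag ja mul0r mulr0.
by rewrite Ipr_diag eqxx mul1r addr0.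
Qed.

Lemma Ipr_form m (a a' : 'M[R[i]]_(m, p)) (b b' : 'M[R[i]]_(m, s)) :
  row_mx a b *m Ipr R p s *m (row_mx a' b')^T = - (a *m a'^T) + b *m b'^T.
Proof.
rewrite /Ipr mul_row_block !mulmx0 add0r addr0 mulmxN !mulmx1.
by rewrite tr_row_mx mul_row_col mulNmx.
Qed.

Lemma kappa_mx_coord m (P : 'M[R[i]]_(m, p + s)) k l k' l' X :
  kappa (mx_coord P k l) (mx_coord P k' l') X
  = (l == l')%:R * (P *m Ipr R p s *m P^T) k k'.
Proof.
rewrite /kappa mxE big_distrr /=; apply: eq_bigr => a _.
under eq_bigr do rewrite !pdC_mx_coord.
rewrite mulmx_Ipr mxE (bigD1 l) //= big1 => [|b /negbTE bl]; last first.
  by rewrite bl mulr0 mul0r mulr0.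
by rewrite eqxx addr0; case: (l == l') => /=; ring.
Qed.

Lemma orthogonal_harmonic_mx_coord m (P : 'M[R[i]]_(m, p + s)) :
  P *m Ipr R p s *m P^T = 0 ->
  orthogonal_harmonic_family (fun f => exists k l, f = mx_coord P k l).
Proof.
move=> PIP; split.
  by move=> f [k [l ->]] X; exact/tau_real_linear/real_linear_mx_coord.
by move=> f g [k [l ->]] [k' [l' ->]] X; rewrite kappa_mx_coord PIP mxE mulr0.
Qed.

End LinearFamily.

Section PhihatMatrix.
Variables (R : realType) (p r : nat).
Local Open Scope complex_scope.

Let u : 'M[R[i]]_(p + r, p) := col_mx 1%:M 0.
Let v : 'M[R[i]]_(p + r, r) := col_mx 0 1%:M.

Let mulii : 'i * 'i = -1 :> R[i]. Proof. by rewrite -expr2 sqr_i. Qed.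

Lemma Ipr_uv : - (u *m u^T) + v *m v^T = Ipr R p r.
Proof.
rewrite /u /v !tr_col_mx !mul_col_row !trmx1 !trmx0 !(mulmx1, mul1mx, mulmx0, mul0mx).
by rewrite opp_block_mx add_block_mx !(oppr0, addr0, add0r).
Qed.

(* Locked: otherwise unification compares the two coefficient matrices entry
   by entry whenever it meets both, which takes minutes. *)
Fact AW_coef_key : unit. Proof. by []. Qed.
Definition AW_coef : 'M[R[i]]_(p + r, p + (p + (r + r))) :=
  locked_with AW_coef_key (row_mx u (row_mx (- u) (row_mx v ('i *: v)))).
Canonical AW_coef_unlockable := [unlockable of AW_coef].

Fact BWbar_coef_key : unit. Proof. by []. Qed.
Definition BWbar_coef : 'M[R[i]]_(p + r, p + (p + (r + r))) :=
  locked_with BWbar_coef_key (row_mx u (row_mx u (row_mx v (- 'i *: v)))).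
Canonical BWbar_coef_unlockable := [unlockable of BWbar_coef].

Lemma AW_AW_form : AW_coef *m Ipr R p (p + (r + r)) *m AW_coef^T = 0.
Proof.
rewrite [AW_coef]unlock Ipr_form !tr_row_mx !mul_row_col.
rewrite !linearN !linearZ /= mulNmx opprK -scalemxAl scalerA mulii scaleN1r.
by rewrite !addrA addNr add0r subrr.
Qed.

Lemma BWbar_BWbar_form : BWbar_coef *m Ipr R p (p + (r + r)) *m BWbar_coef^T = 0.
Proof.
rewrite [BWbar_coef]unlock Ipr_form !tr_row_mx !mul_row_col.
rewrite !linearZ /= -scalemxAl scalerA mulrNN mulii scaleN1r.
by rewrite !addrA addNr add0r subrr.
Qed.

Lemma AW_BWbar_form :
  AW_coef *m Ipr R p (p + (r + r)) *m BWbar_coef^T = 2%:R *: Ipr R p r.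
Proof.
rewrite [AW_coef]unlock [BWbar_coef]unlock Ipr_form !tr_row_mx !mul_row_col.
rewrite !linearZ /= mulNmx -scalemxAl scalerA mulNr mulii opprK scale1r.
by rewrite -Ipr_uv scaler_nat mulr2n addrA addrACA.
Qed.

Lemma BWbar_AW_form :
  BWbar_coef *m Ipr R p (p + (r + r)) *m AW_coef^T = 2%:R *: Ipr R p r.
Proof.
rewrite [AW_coef]unlock [BWbar_coef]unlock Ipr_form !tr_row_mx !mul_row_col.
rewrite !linearN !linearZ /= -scalemxAl scalerA mulrN mulii opprK scale1r.
by rewrite -Ipr_uv scaler_nat mulr2n addrA addrACA.
Qed.

Lemma Ipr_mulmx_Ipr : Ipr R p r *m Ipr R p r = 1%:M.
Proof.
rewrite /Ipr mulmx_block !(mulmx0, mul0mx, addr0, add0r) mulmxN mulNmx opprK !mulmx1.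
by rewrite -scalar_mx_block.
Qed.

Lemma in_soC_Ipr (M : 'M[R[i]]_(p + r)) :
  in_soC M -> Ipr R p r *m M^T + M *m Ipr R p r = 0.
Proof.
move=> soM; have := congr1 (fun N => Ipr R p r *m N *m Ipr R p r) soM.
rewrite /= mulmx0 mul0mx mulmxDr mulmxDl !mulmxA Ipr_mulmx_Ipr mul1mx.
by rewrite -[_ *m M^T *m _ *m _]mulmxA Ipr_mulmx_Ipr mulmx1.
Qed.

Definition Phihat_coef (M : 'M[R[i]]_(p + r)) : 'M[R[i]]_(p + r, p + (p + (r + r))) :=
  AW_coef + M *m BWbar_coef.

Lemma Phihat_coef_form (M : 'M[R[i]]_(p + r)) :
  in_soC M -> Phihat_coef M *m Ipr R p (p + (r + r)) *m (Phihat_coef M)^T = 0.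
Proof.
move=> soM; rewrite mulmx_form_expand.
rewrite AW_AW_form BWbar_BWbar_form AW_BWbar_form BWbar_AW_form mulmx0 mul0mx add0r addr0.
by rewrite -scalemxAl -scalemxAr -scalerDr in_soC_Ipr ?scaler0.
Qed.

Lemma AW_coef_cplx (X0 X1 : 'M[R]_p) (X2 X3 : 'M[R]_(r, p)) :
  AW_coef *m cplx_mx (col_mx X0 (col_mx X1 (col_mx X2 X3))) =
  col_mx (\matrix_(i < p, j < p) (X0 i j - X1 i j)%:C)
         (\matrix_(i < r, j < p) (X2 i j +i* X3 i j)).
Proof.
rewrite /cplx_mx !map_col_mx [AW_coef]unlock !mul_row_col mulNmx -scalemxAl !mul_col_mx.
rewrite !(mul1mx, mul0mx) scale_col_mx scaler0 opp_col_mx oppr0 !add_col_mx.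
congr col_mx; apply/matrixP => i j; rewrite !mxE.
  by rewrite !addr0 rmorphB.
by rewrite !add0r [RHS]complexE.
Qed.

Lemma BWbar_coef_cplx (X0 X1 : 'M[R]_p) (X2 X3 : 'M[R]_(r, p)) :
  BWbar_coef *m cplx_mx (col_mx X0 (col_mx X1 (col_mx X2 X3))) =
  col_mx (\matrix_(i < p, j < p) (X0 i j + X1 i j)%:C)
         (\matrix_(i < r, j < p) (X2 i j -i* X3 i j)).
Proof.
rewrite /cplx_mx !map_col_mx [BWbar_coef]unlock !mul_row_col -scalemxAl !mul_col_mx.
rewrite !(mul1mx, mul0mx) scale_col_mx scaler0 !add_col_mx.
congr col_mx; apply/matrixP => i j; rewrite !mxE.
  by rewrite !addr0 rmorphD.
by rewrite !add0r [RHS]complexE /= rmorphN mulrN mulNr.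
Qed.

Lemma Phihat_mx_coord (M : 'M[R[i]]_(p + r)) X k l :
  Phihat M X k l = mx_coord (Phihat_coef M) k l X.
Proof.
rewrite /Phihat /mx_coord /Phihat_coef mulmxDl -mulmxA.
set X0 := usubmx X; set X1 := usubmx (dsubmx X).
set X2 := usubmx (dsubmx (dsubmx X)); set X3 := dsubmx (dsubmx (dsubmx X)).
have -> : X = col_mx X0 (col_mx X1 (col_mx X2 X3)) by rewrite !vsubmxK.
by rewrite AW_coef_cplx BWbar_coef_cplx.
Qed.

End PhihatMatrix.

Theorem proposition5p1 (R : realType) (p r : nat) (hp : (0 < p)%N) (hr : (0 < r)%N)
  (M : 'M[R[i]]_(p + r)) (hM : in_soC M) :
  orthogonal_harmonic_family
    (fun f : 'M[R]_(p + (p + (r + r)), p) -> R[i] =>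
       exists (k : 'I_(p + r)) (l : 'I_p), f = (fun X => Phihat M X k l)).
Proof.
have Phihat_coord k l : (fun X => Phihat M X k l) = mx_coord (Phihat_coef M) k l.
  by apply: funext => X; exact: Phihat_mx_coord.
have -> : (fun f => exists k l, f = fun X => Phihat M X k l) =
          (fun f => exists k l, f = mx_coord (Phihat_coef M) k l).
  by apply: funext => f; under eq_exists do under eq_exists do rewrite Phihat_coord.
exact/orthogonal_harmonic_mx_coord/Phihat_coef_form.
Qed.
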